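(* Let $d\ge 2$, $x\in\mathbb{R}^d$, $n$ a positive integer, and let $\mathcal{P}$ be a Poisson point process of intensity one in $\mathbb{R}^d$. For any $a_0>0$ there exist constants $c,c'>0$ depending only on $a_0$ and $d$ such that for every $a\in(0,a_0]$ with $B(x,a)\subset B(n)$ and every $b>a$ with $B(n)\cap\partial B(x,b)\ne\emptyset$, $$\mathbb{P}\big(\mathcal{P}\text{ does not contain a }B(n)\text{-wall around }B(x,a)\text{ in }B(x,b)\big)\le c\exp(-c'b^d).$$
   Context: $B(x,r)=x+[-r,r]^d$, $B(r)=B(0,r)$; $S(p,r)$ is the closed Euclidean ball of radius $r$ centered at $p$; $d(\cdot,\cdot)$ is Euclidean distance. Definition (wall): for $b>a>0$, $x\in\mathbb{R}^d$ and a cube $K\supset B(x,a)$ with $K\cap\partial B(x,b)\ne\emptyset$, a set $\mathfrak{W}\subset\mathbb{R}^d$ contains a $K$-wall around $B(x,a)$ in $B(x,b)$ if for every $p_1\in\partial B(x,a)$ and every $p_2\in K\cap\partial B(x,b)$ the set $K\cap\mathfrak{W}\cap S(p_1,\tfrac34 d(p_1,p_2))\cap S(p_2,\tfrac34 d(p_1,p_2))\cap(B(x,b)\setminus B(x,a))$ is nonempty. *)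

From HB Require Import structures.
From mathcomp Require Import all_boot all_order all_algebra.
From mathcomp Require Import all_classical all_reals all_analysis.
Set Implicit Arguments. Unset Strict Implicit. Unset Printing Implicit Defensive.
Import Order.TTheory GRing.Theory Num.Theory numFieldTopology.Exports numFieldNormedType.Exports.
Local Open Scope classical_set_scope.
Local Open Scope ring_scope.
Local Open Scope card_scope.

Section Geometry.
Variables (R : realType) (d : nat).
Local Notation pt := 'rV[R]_d.

Definition edist (p q : pt) : R :=
  Num.sqrt (\sum_(i < d) (p ord0 i - q ord0 i) ^+ 2).

(* B(x,r) = x + [-r,r]^d *)
Definition cube (x : pt) (r : R) : set pt :=
  [set y | forall i : 'I_d, `|y ord0 i - x ord0 i| <= r].

Definition cube_bd (x : pt) (r : R) : set pt :=
  [set y | cube x r y /\ exists i : 'I_d, `|y ord0 i - x ord0 i| = r].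

Definition eball (p : pt) (r : R) : set pt := [set y | edist p y <= r].

Definition contains_wall (W K : set pt) (x : pt) (a b : R) : Prop :=
  forall p1 p2 : pt, cube_bd x a p1 -> K p2 -> cube_bd x b p2 ->
    K `&` W `&` eball p1 (3/4 * edist p1 p2) `&` eball p2 (3/4 * edist p1 p2)
      `&` (cube x b `\` cube x a) !=set0.

Definition box_vol (lo hi : pt) : R :=
  \prod_(i < d) Num.max 0 (hi ord0 i - lo ord0 i).

Definition box (lo hi : pt) : set pt :=
  [set y | forall i : 'I_d, lo ord0 i <= y ord0 i <= hi ord0 i].

(* d-dimensional Lebesgue (outer) measure: infimum of the total volume of
   countable covers by closed boxes; on Borel sets this is Lebesgue measure *)
Definition leb (A : set pt) : \bar R :=
  ereal_inf [set s | exists lo hi : nat -> pt,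
     A `<=` \bigcup_k box (lo k) (hi k) /\
     s = (\sum_(0 <= k <oo) (box_vol (lo k) (hi k))%:E)%E].

Definition borel (A : set pt) : Prop := <<s [set: pt], [set U : set pt | open U] >> A.

Definition bounded_set (A : set pt) : Prop := exists r : R, A `<=` cube 0 r.

End Geometry.

(* Poisson probability mass function with mean r >= 0 (with 0^0 = 1) *)
Definition pois_pmf {R : realType} (r : R) (k : nat) : R :=
  r ^+ k / (k`!)%:R * expR (- r).

(* Pi : Omega -> set R^d is a Poisson point process of intensity one on
   (Omega, P): for every finite family of pairwise disjoint bounded Borel
   sets A_0, ..., A_{m-1}, the counts N(A_i) = #(Pi `&` A_i) are
   (a.s. finite and) independent Poisson random variables with means leb A_i.
   "N(A) = k" is expressed as (Pi w `&` A) #= `I_k. *)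
Definition poisson_pp {R : realType} (d : nat) {dT : measure_display}
    {T : measurableType dT} (P : probability T R) (Pi : T -> set 'rV[R]_d) : Prop :=
  (forall (A : set 'rV[R]_d) (k : nat), borel A -> bounded_set A ->
      measurable [set w | (Pi w `&` A) #= `I_k]) /\
  (forall (m : nat) (A : 'I_m -> set 'rV[R]_d) (k : 'I_m -> nat),
      (forall i, borel (A i)) -> (forall i, bounded_set (A i)) ->
      (forall i j, i != j -> A i `&` A j = set0) ->
      P [set w | forall i, (Pi w `&` A i) #= `I_(k i)] =
        (\prod_(i < m) pois_pmf (fine (leb (A i))) (k i))%:E).

From Pilot Require Import Defs.
From HB Require Import structures.
From mathcomp Require Import all_boot all_order all_algebra.
From mathcomp Require Import all_classical all_reals all_analysis.
From mathcomp Require Import ring lra zify.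
Set Implicit Arguments. Unset Strict Implicit. Unset Printing Implicit Defensive.
Import Order.TTheory GRing.Theory Num.Theory numFieldTopology.Exports numFieldNormedType.Exports.
Local Open Scope classical_set_scope.
Local Open Scope ring_scope.
Local Open Scope card_scope.

(* Once b exceeds a fixed multiple of a0 (below that the bound is trivial
   for a large c), cut B(x,b) into (32d)^d grid cells of side s = b/(16d).
   For p1 on the boundary of B(x,a) and p2 on that of B(x,b), the midpoint
   of p1 p2 is at distance about |p1 - p2|/2 >> s from both points and,
   in the coordinate where |p2 - x| = b, at distance about b/2 from B(x,a);
   so some grid cell near the midpoint lies in the region required by the
   wall condition.  Hence a wall exists as soon as every cell contains a
   point of the process.  A cell is empty with probability exp(-|cell|),
   and |cell| >= (s/4)^d (Heine-Borel plus counting grid points in the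
   covering boxes), so a union bound over the cells gives the estimate. *)

Definition cell {R : realType} {d : nat} (lo : 'rV[R]_d) (s : R) : set 'rV[R]_d :=
  [set y | forall i, lo ord0 i <= y ord0 i <= lo ord0 i + s].

Lemma sum_nat_itv_indicator (N m g : nat) :
  (\sum_(t < N) ((m <= t) && (t < m + g))%N = minn N (m + g) - minn N m)%N.
Proof.
elim: N => [|N IH]; first by rewrite big_ord0 !min0n.
rewrite big_ord_recr /= IH.
have [h1|h1] := boolP (m <= N)%N; have [h2|h2] := boolP (N < m + g)%N => /=; lia.
Qed.

Section Counting.
Variable R : realType.

Lemma count_arith_prog_in_itv (N : nat) (c h al be : R) : 0 < h -> al <= be ->
  \sum_(t < N) (nat_of_bool ((al <= c + t%:R * h) && (c + t%:R * h <= be)))%:R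
    <= (be - al) / h + 1.
Proof.
move=> h0 ab.
have Lge0 : 0 <= (be - al) / h by apply: divr_ge0; lra.
pose P t := (t < N)%N && ((al <= c + t%:R * h) && (c + t%:R * h <= be)).
have [ex|nex] := pselect (exists t, P t); last first.
  rewrite big1 ?addr_ge0 // => t _.
  case Ht: (_ && _) => //; exfalso; apply: nex; exists t.
  by rewrite /P ltn_ord Ht.
pose m := ex_minn ex.
have [Pm minm] : P m /\ forall t, P t -> (m <= t)%N by rewrite /m; case: ex_minnP.
move: Pm => /andP[_ /andP[Hm1 Hm2]].
pose g := (Num.truncn ((be - al) / h)).+1.
have /andP[T1 T2] := truncn_itv Lge0.
apply: (@le_trans _ _ (\sum_(t < N) ((m <= t) && (t < m + g))%N%:R)).
  apply: ler_sum => t _.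
  case Ht: (_ && _) => //.
  have mt : (m <= t)%N by apply: minm; rewrite /P ltn_ord Ht.
  move: Ht => /andP[Ht1 Ht2].
  rewrite mt /=.
  have : t%:R - m%:R <= (be - al) / h :> R by rewrite ler_pdivlMr //; lra.
  move=> H; have : (t - m)%:R < g%:R :> R by rewrite natrB //; apply: le_lt_trans H T2.
  by rewrite ltr_nat => H3; have -> : (t < m + g)%N by lia.
rewrite -natr_sum sum_nat_itv_indicator.
have : (minn N (m + g) - minn N m <= g)%N by lia.
by rewrite -(ler_nat R) => H; apply: le_trans H _; rewrite /g -addn1 natrD; lra.
Qed.

(* Count the N^d points of a grid of mesh s/N in the cell: each lies in one
   of the boxes, and a box with sides L_i >= s/N contains at most
   prod_i (2 N L_i / s) of them. *)
Lemma box_cover_vol_ge (d : nat) (s : R) (lo : 'rV[R]_d) (K N : nat) (A L : nat -> 'rV[R]_d) :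
  0 < s -> (0 < N)%N -> (forall k i, (k < K)%N -> s / N%:R <= L k ord0 i) ->
  (forall y, cell lo s y ->
     exists2 k, (k < K)%N & forall i, A k ord0 i <= y ord0 i <= A k ord0 i + L k ord0 i) ->
  (s / 2) ^+ d <= \sum_(k < K) \prod_(i < d) L k ord0 i.
Proof.
move=> s0 N0 Lh cov.
set h := s / N%:R.
have N0R : 0 < N%:R :> R by rewrite ltr0n.
have h0 : 0 < h by rewrite /h divr_gt0.
pose F (k : 'I_K) (i : 'I_d) (t : 'I_N) : R :=
  (nat_of_bool ((A k ord0 i <= lo ord0 i + t%:R * h) &&
                (lo ord0 i + t%:R * h <= A k ord0 i + L k ord0 i)))%:R.
have covered (j : {ffun 'I_d -> 'I_N}) : 1 <= \sum_(k < K) \prod_(i < d) F k i (j i).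
  pose y := \row_(i < d) (lo ord0 i + (j i)%:R * h).
  have [k kK Hk] : exists2 k, (k < K)%N &
      forall i, A k ord0 i <= y ord0 i <= A k ord0 i + L k ord0 i.
    apply: cov => i; rewrite /y mxE.
    have jN : (j i)%:R <= N%:R :> R by rewrite ler_nat ltnW.
    have : (j i)%:R * h <= s.
      by rewrite /h mulrA ler_pdivrMr // mulrC ler_wpM2l // ltW.
    have : 0 <= (j i)%:R * h by rewrite mulr_ge0 // ltW.
    lra.
  rewrite (bigD1 (Ordinal kK)) //= big1; last first.
    by move=> i _; have := Hk i; rewrite /y mxE /F => ->.
  have : 0 <= \sum_(k0 < K | k0 != Ordinal kK) \prod_(i < d) F k0 i (j i).
    by apply: sumr_ge0 => k0 _; apply: prodr_ge0 => i _; rewrite /F ler0n.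
  lra.
have count : (N ^ d)%:R <= \sum_(k < K) \prod_(i < d) (2 / h * L k ord0 i).
  have -> : (N ^ d)%:R = \sum_(j : {ffun 'I_d -> 'I_N}) (1 : R).
    by rewrite sumr_const card_ffun !card_ord.
  apply: (le_trans (ler_sum _ (fun j _ => covered j))).
  rewrite exchange_big /=; apply: ler_sum => k _.
  rewrite -bigA_distr_bigA /=; apply: ler_prod => i _; apply/andP; split.
    by apply: sumr_ge0 => t _; rewrite /F ler0n.
  have Lk := Lh k i (ltn_ord k).
  have L0 : 0 <= L k ord0 i by apply: le_trans Lk; exact: ltW.
  apply: le_trans (@count_arith_prog_in_itv N (lo ord0 i) h (A k ord0 i)
    (A k ord0 i + L k ord0 i) h0 _) _; first lra.
  have -> : A k ord0 i + L k ord0 i - A k ord0 i = L k ord0 i by ring.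
  have : 1 <= L k ord0 i / h by rewrite ler_pdivlMr // mul1r.
  have -> : 2 / h * L k ord0 i = 2 * (L k ord0 i / h) by rewrite mulrAC -mulrA.
  lra.
move: count.
have -> : \sum_(k < K) \prod_(i < d) (2 / h * L k ord0 i) =
    (2 / h) ^+ d * \sum_(k < K) \prod_(i < d) L k ord0 i.
  by rewrite mulr_sumr; apply: eq_bigr => k _; rewrite big_split /= prodr_const card_ord.
have e1 : s / 2 * (2 / h) = N%:R by rewrite /h; field; rewrite ?gt_eqF.
have p0 : 0 < (2 / h) ^+ d by apply: exprn_gt0; rewrite divr_gt0.
by rewrite natrX -e1 exprMn mulrC => H; rewrite -(ler_pM2l p0).
Qed.

Lemma prod_addr_le (I : Type) (r : seq I) (L : I -> R) (t : R) :
  (forall i, 0 <= L i) -> 0 <= t <= 1 ->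
  \prod_(i <- r) (L i + t) <= \prod_(i <- r) L i + t * (size r)%:R * \prod_(i <- r) (L i + 1).
Proof.
move=> L0 /andP[t0 t1].
elim: r => [|a r IH]; first by rewrite !big_nil /= mulr0 mul0r addr0.
rewrite !big_cons /= -natr1.
set X := \prod_(i <- r) (L i + t) in IH *.
set Y := \prod_(i <- r) L i in IH *.
set Z := \prod_(i <- r) (L i + 1) in IH *.
set n := (size r)%:R in IH *.
have n0 : 0 <= n by [].
have X0 : 0 <= X by apply: prodr_ge0 => i _; apply: addr_ge0.
have Y0 : 0 <= Y by apply: prodr_ge0 => i _.
have YZ : Y <= Z by apply: ler_prod => i _; apply/andP; split => //; have := L0 i; lra.
have La := L0 a.
have Z0 : 0 <= Z by apply: le_trans YZ.
have H1 : (L a + t) * X <= (L a + t) * (Y + t * n * Z).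
  by apply: ler_wpM2l => //; apply: addr_ge0.
apply: le_trans H1 _.
have h1 : t * Y <= t * ((L a + 1) * Z) by apply: ler_wpM2l => //; nra.
have h2 : (L a + t) * (t * n * Z) <= (L a + 1) * (t * n * Z).
  by apply: ler_wpM2r; [rewrite !mulr_ge0 | lra].
nra.
Qed.

Lemma sum_inv_pow2_le1 (K : nat) : \sum_(k < K) (2 ^+ k.+1 : R)^-1 <= 1.
Proof.
have -> : \sum_(k < K) (2 ^+ k.+1 : R)^-1 = 1 - (2 ^+ K)^-1.
  elim: K => [|K IH]; first by rewrite big_ord0 expr0 invr1 subrr.
  rewrite big_ord_recr /= IH exprS.
  have : (2 ^+ K : R) != 0 by rewrite expf_neq0.
  by move=> H; field.
have : 0 <= (2 ^+ K : R)^-1 by rewrite invr_ge0 exprn_ge0.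
lra.
Qed.

(* The t_k are chosen so that the k-th perturbation costs at most e / 2^(k+1). *)
Lemma prod_perturb_sum_le (d : nat) (l : nat -> 'I_d -> R) (e : R) :
  (0 < d)%N -> 0 < e -> (forall k i, 0 <= l k i) ->
  exists2 t : nat -> R, (forall k, 0 < t k) & forall K,
    \sum_(k < K) \prod_(i < d) (l k i + t k) <= \sum_(k < K) \prod_(i < d) l k i + e.
Proof.
move=> d0 e0 l0.
pose P k := \prod_(i < d) (l k i + 1).
have P1 k : 1 <= P k.
  have : \prod_(i < d) (1 : R) <= P k.
    by apply: ler_prod => i _; apply/andP; split => //; have := l0 k i; lra.
  by rewrite prodr_const expr1n.
have dR : 0 < d%:R :> R by rewrite ltr0n.
have den0 k : 0 < 2 ^+ k.+1 * d%:R * P k.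
  by rewrite !mulr_gt0 ?exprn_gt0 //; have := P1 k; lra.
pose t k := Num.min 1 (e / (2 ^+ k.+1 * d%:R * P k)).
exists t => [k|K]; first by rewrite /t lt_min ltr01 divr_gt0.
have cost k : t k * d%:R * P k <= e / 2 ^+ k.+1.
  have : t k <= e / (2 ^+ k.+1 * d%:R * P k) by rewrite /t ge_min lexx orbT.
  rewrite ler_pdivlMr // ler_pdivlMr ?exprn_gt0 // => H.
  by apply: le_trans H; rewrite le_eqVlt; apply/orP; left; apply/eqP; ring.
have sz : size (index_enum 'I_d) = d.
  by rewrite -(filter_predT (index_enum _)) deprecated_filter_index_enum -cardE card_ord.
have step k : \prod_(i < d) (l k i + t k) <= \prod_(i < d) l k i + e / 2 ^+ k.+1.
  have tk : 0 <= t k <= 1 by rewrite /t ge_min lexx le_min ler01 divr_ge0 // ltW.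
  have := @prod_addr_le _ (index_enum 'I_d) (l k) (t k) (l0 k) tk; rewrite sz.
  by have := cost k; rewrite /P; lra.
apply: (@le_trans _ _ (\sum_(k < K) (\prod_(i < d) l k i + e / 2 ^+ k.+1))).
  by apply: ler_sum => k _; exact: step.
rewrite big_split /= lerD2l -mulr_sumr -[leRHS]mulr1.
by apply: ler_wpM2l; [exact: ltW | exact: sum_inv_pow2_le1].
Qed.

Lemma ler_sum_term (K : nat) (F : nat -> R) k : (forall j, 0 <= F j) -> (k < K)%N ->
  F k <= \sum_(j < K) F j.
Proof.
move=> F0 kK; rewrite (bigD1 (Ordinal kK)) //=.
have : 0 <= \sum_(j < K | j != Ordinal kK) F j by apply: sumr_ge0.
lra.
Qed.

End Counting.

Section Topology.
Variable R : realType.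

Lemma open_row_box (d : nat) (a b : 'I_d -> R) :
  open [set y : 'rV[R]_d | forall i, a i < y ord0 i < b i].
Proof.
rewrite openE => y Oy.
apply: (@filter_forall _ _ (fun i (z : 'rV[R]_d) => a i < z ord0 i < b i) (nbhs y)) => i.
apply: (@coord_continuous R 1 d ord0 i y [set x : R | a i < x < b i]).
apply: open_nbhs_nbhs; split; last exact: Oy.
have -> : [set x : R | a i < x < b i] = `]a i, b i[%classic.
  by apply/seteqP; split => x /=; rewrite in_itv.
exact: interval_open.
Qed.

Lemma compact_cell (d : nat) (lo : 'rV[R]_d) (s : R) : compact (cell lo s).
Proof.
have -> : cell lo s = [set y | forall i, `[lo ord0 i, lo ord0 i + s]%classic (y ord0 i)].
  by apply/seteqP; split => y /= H i; have := H i; rewrite /= in_itv.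
apply: (@rV_compact R d (fun i => `[lo ord0 i, lo ord0 i + s]%classic)) => i.
exact: segment_compact.
Qed.

Lemma closed_cell (d : nat) (lo : 'rV[R]_d) (s : R) : closed (cell lo s).
Proof.
have -> : cell lo s = \bigcap_(i in [set: 'I_d])
    ((fun y : 'rV[R]_d => y ord0 i) @^-1` `[lo ord0 i, lo ord0 i + s]%classic).
  apply/seteqP; split => y /= H.
    by move=> i _ /=; rewrite in_itv /=; exact: H i.
  by move=> i; have := H i I; rewrite /= in_itv.
apply: closed_bigI => i _.
apply: preimage_closed; last exact: interval_closed.
by move=> y _; apply: (@coord_continuous R 1 d ord0 i).
Qed.

(* Enlarging the k-th box by eta_k makes it open, so Heine-Borel applies. *)
Lemma cell_cover_finite (d : nat) (lo : 'rV[R]_d) (s : R) (lk hk : nat -> 'rV[R]_d)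
    (eta : nat -> R) :
  (forall k, 0 < eta k) -> cell lo s `<=` \bigcup_k box (lk k) (hk k) ->
  exists K, forall y, cell lo s y ->
    exists2 k, (k < K)%N & forall i, lk k ord0 i - eta k < y ord0 i < hk k ord0 i + eta k.
Proof.
move=> eta0 cov.
pose O k := [set y : 'rV[R]_d | forall i, lk k ord0 i - eta k < y ord0 i < hk k ord0 i + eta k].
have Oopen k : open (O k).
  by apply: open_row_box.
have cellO : cell lo s `<=` \bigcup_(k in [set: nat]) O k.
  move=> y /cov [k _ Hk]; exists k => // i.
  by have := Hk i; have := eta0 k; lra.
have := @compact_cell d lo s; rewrite compact_cover.
move=> /(_ nat [set: nat] O (fun k _ => Oopen k) cellO) [D _ cellD].
exists (\max_(k <- finmap.enum_fset D) k).+1 => y /cellD [k Dk Ok].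
by exists k => //; rewrite ltnS; apply: leq_bigmax_seq.
Qed.

End Topology.

Section Volume.
Variable R : realType.

Lemma leb_cell_ge (d : nat) (lo : 'rV[R]_d) (s : R) : (0 < d)%N -> 0 < s ->
  (((s / 4) ^+ d)%:E <= leb (cell lo s))%E.
Proof.
move=> d0 s0; apply: le_ereal_inf_tmp => _ [lk [hk [cov ->]]].
set e := (s / 4) ^+ d.
have e0 : 0 < e by apply: exprn_gt0; rewrite divr_gt0.
pose l k i := Num.max 0 (hk k ord0 i - lk k ord0 i).
have l0 k i : 0 <= l k i by rewrite /l le_max lexx.
have [t t0 tsum] := prod_perturb_sum_le d0 e0 l0.
pose eta k := t k / 2.
have eta0 k : 0 < eta k by rewrite /eta divr_gt0.
have [K covK] := cell_cover_finite eta0 cov.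
pose N := (Num.truncn (\sum_(k < K) s / eta k)).+1.
pose A k := \row_(j < d) (lk k ord0 j - eta k).
pose L k := \row_(j < d) (l k j + 2 * eta k).
have Lh k i : (k < K)%N -> s / N%:R <= L k ord0 i.
  move=> kK; rewrite /L mxE.
  have S0 : 0 <= \sum_(k < K) s / eta k by apply: sumr_ge0 => j _; rewrite divr_ge0 ?ltW.
  have Fk := ler_sum_term (fun j => divr_ge0 (ltW s0) (ltW (eta0 j))) kK.
  have /andP[_ T2] := truncn_itv S0.
  have N0 : 0 < N%:R :> R by rewrite ltr0n.
  have : s / N%:R <= eta k.
    rewrite ler_pdivrMr // mulrC -ler_pdivrMr //.
    by apply: ltW; apply: le_lt_trans Fk T2.
  by have := l0 k i; have := eta0 k; lra.
have covAL y : cell lo s y -> exists2 k, (k < K)%N &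
    forall i, A k ord0 i <= y ord0 i <= A k ord0 i + L k ord0 i.
  move=> /covK [k kK Ok]; exists k => // i; have := Ok i; rewrite /A /L !mxE.
  have : hk k ord0 i - lk k ord0 i <= l k i by rewrite /l le_max lexx orbT.
  lra.
have grid := box_cover_vol_ge s0 (ltn0Sn _) Lh covAL.
have LE (k : 'I_K) : \prod_(i < d) L k ord0 i = \prod_(i < d) (l k i + t k).
  by apply: eq_bigr => i _; rewrite /L mxE /eta; congr (_ + _); field.
rewrite (eq_bigr _ (fun k _ => LE k)) in grid.
have two : 2 * e <= (s / 2) ^+ d.
  have -> : s / 2 = 2 * (s / 4) by field.
  rewrite exprMn /e; apply: ler_wpM2r; first exact: ltW.
  have -> : (2 : R) ^+ d = 2 * 2 ^+ d.-1 by rewrite -exprS prednK.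
  by rewrite ler_peMr //; apply: exprn_ege1; lra.
have fin : e <= \sum_(k < K) box_vol (lk k) (hk k) by have := tsum K; lra.
apply: (@le_trans _ _ (\sum_(0 <= k < K) (box_vol (lk k) (hk k))%:E)%E).
  by rewrite sumEFin big_mkord lee_fin.
have vol0 k : 0 <= box_vol (lk k) (hk k).
  by apply: prodr_ge0 => i _; rewrite le_max lexx.
exact: (@nneseries_lim_ge R (fun k => (box_vol (lk k) (hk k))%:E) xpredT 0 K (fun k _ _ => vol0 k)).
Qed.

Lemma leb_cell_le (d : nat) (lo : 'rV[R]_d) (s : R) : (0 < d)%N -> 0 < s ->
  (leb (cell lo s) <= (s ^+ d)%:E)%E.
Proof.
move=> d0 s0; apply: ge_ereal_inf.
(* Cover by the cell itself, followed by empty boxes of volume 0. *)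
pose lk k : 'rV[R]_d := if k == 0%N then lo else const_mx 1.
pose hk k : 'rV[R]_d := if k == 0%N then \row_i (lo ord0 i + s) else const_mx 0.
exists (\sum_(0 <= k <oo) (box_vol (lk k) (hk k))%:E)%E.
  by exists lk, hk; split => // y Qy; exists 0%N => //= i; rewrite /lk /hk /= mxE; exact: Qy.
have f0 k : (0 <= (box_vol (lk k) (hk k))%:E)%E.
  by rewrite lee_fin /box_vol; apply: prodr_ge0 => i _; rewrite le_max lexx.
rewrite (@nneseries_split R _ 0 1) // (@eseries0 R _ (0 + 1)%N xpredT); last first.
  move=> k k1 _; rewrite /lk /hk.
  have -> : (k == 0%N) = false by apply/negbTE; rewrite -lt0n.
  rewrite /box_vol; apply/eqP; rewrite eqe; apply/eqP.
  rewrite (bigD1 (Ordinal d0)) //= !mxE.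
  have -> : Num.max 0 (0 - 1 : R) = 0 by rewrite sub0r; apply/max_idPl; rewrite lerN10.
  by rewrite mul0r.
rewrite adde0 big_nat1 /lk /hk /= /box_vol lee_fin.
have -> : s ^+ d = \prod_(i < d) s by rewrite prodr_const card_ord.
apply: ler_prod => i _; rewrite !mxE.
have -> : lo ord0 i + s - lo ord0 i = s by ring.
by rewrite le_max lexx /= ge_max lexx ltW.
Qed.

Lemma fine_leb_cell_ge (d : nat) (lo : 'rV[R]_d) (s : R) : (0 < d)%N -> 0 < s ->
  (s / 4) ^+ d <= fine (leb (cell lo s)).
Proof.
move=> d0 s0.
move: (@leb_cell_ge d lo s d0 s0) (@leb_cell_le d lo s d0 s0).
by case: (leb _) => [r| |] //=; rewrite ?lee_fin.
Qed.

End Volume.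

Section Geometry.
Variable R : realType.

Lemma grid_cell_in_window (lo s u : R) (M : nat) :
  0 < s -> lo <= u -> u + 2 * s <= lo + M%:R * s ->
  exists k : 'I_M, u <= lo + k%:R * s /\ lo + k%:R * s + s <= u + 2 * s.
Proof.
move=> s0 lu uM.
have t0 : 0 <= (u - lo) / s by apply: divr_ge0; lra.
have /andP[T1 T2] := truncn_itv t0.
set k := (Num.truncn ((u - lo) / s)).+1.
have e1 : (u - lo) / s * s = u - lo by rewrite -mulrA mulVf ?mulr1 // gt_eqF.
have kR : k%:R = (Num.truncn ((u - lo) / s))%:R + 1 :> R by rewrite /k -natr1.
have H1 : u <= lo + k%:R * s.
  have : (u - lo) / s * s <= k%:R * s by apply: ler_wpM2r; [apply: ltW | apply: ltW].
  lra.
have H2 : lo + k%:R * s + s <= u + 2 * s.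
  have : (Num.truncn ((u - lo) / s))%:R * s <= (u - lo) / s * s.
    by apply: ler_wpM2r => //; apply: ltW.
  rewrite kR; nra.
have kM : (k < M)%N.
  have : k.+1%:R * s <= M%:R * s by rewrite -natr1; nra.
  by rewrite ler_pM2r // ler_nat.
by exists (Ordinal kM).
Qed.

Lemma exists_max3 (A B C : R) :
  exists u, [/\ A <= u, B <= u, C <= u & (u = A \/ u = B \/ u = C)].
Proof.
case: (lerP A B) => h1; case: (lerP B C) => h2; case: (lerP A C) => h3.
all: first [ exists A; split; [lra|lra|lra|by left]
           | exists B; split; [lra|lra|lra|by right; left]
           | exists C; split; [lra|lra|lra|by right; right] ].
Qed.

Lemma cube_sub_cube0_coord (d n : nat) (x : 'rV[R]_d) (a : R) : 0 < a ->
  cube x a `<=` cube 0 n%:R -> forall i, `|x ord0 i| + a <= n%:R.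
Proof.
move=> a0 sub i.
pose y : 'rV[R]_d :=
  \row_j (x ord0 j + (if j == i then (if 0 <= x ord0 i then a else - a) else 0)).
have cy : cube x a y.
  move=> j; rewrite /y mxE.
  case: (j == i); last by rewrite addrC addKr normr0 ltW.
  by rewrite addrC addKr; case: (0 <= x ord0 i); rewrite ?normrN gtr0_norm.
have := sub y cy i; rewrite /y !mxE eqxx subr0.
case: (lerP 0 (x ord0 i)) => hx; first by rewrite !ger0_norm //; lra.
by rewrite (ltr0_norm hx) ltr0_norm; lra.
Qed.

Lemma edistC (d : nat) (p q : 'rV[R]_d) : Defs.edist p q = Defs.edist q p.
Proof. by rewrite /Defs.edist; congr Num.sqrt; apply: eq_bigr => i _; rewrite -sqrrN opprB. Qed.

Lemma cube_bd_dist2_ge (d : nat) (x p1 p2 : 'rV[R]_d) (a b : R) : a <= b ->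
  cube x a p1 -> cube_bd x b p2 -> (b - a) ^+ 2 <= \sum_(i < d) (p1 ord0 i - p2 ord0 i) ^+ 2.
Proof.
move=> ab c1 [_ [j hj]].
rewrite (bigD1 j) //=.
have rest : 0 <= \sum_(i < d | i != j) (p1 ord0 i - p2 ord0 i) ^+ 2.
  by apply: sumr_ge0 => i _; exact: sqr_ge0.
have far : b - a <= `|p1 ord0 j - p2 ord0 j|.
  have e : p2 ord0 j - x ord0 j = (p2 ord0 j - p1 ord0 j) + (p1 ord0 j - x ord0 j) by ring.
  have := ler_normD (p2 ord0 j - p1 ord0 j) (p1 ord0 j - x ord0 j).
  by rewrite -e hj distrC; have := c1 j; lra.
have : (b - a) ^+ 2 <= `|p1 ord0 j - p2 ord0 j| ^+ 2 by rewrite ler_sqr ?nnegrE //; lra.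
by rewrite real_normK ?num_real //; lra.
Qed.

(* (u/2 - del)^2 <= (5/16) u^2 + 5 del^2 is AM-GM applied to (u/4 + 2 del)^2 >= 0. *)
Lemma edist_le_near_midpoint (d : nat) (p q z : 'rV[R]_d) (r : R) :
  (forall i, `|z ord0 i - (p ord0 i + q ord0 i) / 2| <= r) ->
  20 * d%:R * r ^+ 2 <= \sum_(i < d) (p ord0 i - q ord0 i) ^+ 2 ->
  Defs.edist p z <= 3 / 4 * Defs.edist p q.
Proof.
move=> zr big.
set D2 := \sum_(i < d) (p ord0 i - q ord0 i) ^+ 2 in big.
have D20 : 0 <= D2 by apply: sumr_ge0 => i _; apply: sqr_ge0.
have S : \sum_(i < d) (p ord0 i - z ord0 i) ^+ 2 <= 9 / 16 * D2.
  apply: (@le_trans _ _ (\sum_(i < d) (5 / 16 * (p ord0 i - q ord0 i) ^+ 2 + 5 * r ^+ 2))).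
    apply: ler_sum => i _.
    have := zr i; rewrite ler_norml => /andP[h1 h2].
    set u := p ord0 i - q ord0 i.
    set del := z ord0 i - (p ord0 i + q ord0 i) / 2 in h1 h2 *.
    have -> : p ord0 i - z ord0 i = u / 2 - del by rewrite /u /del; field.
    have del2 : del ^+ 2 <= r ^+ 2.
      have : 0 <= (r - del) * (r + del) by apply: mulr_ge0; lra.
      have : r ^+ 2 - del ^+ 2 = (r - del) * (r + del) by ring.
      lra.
    have := sqr_ge0 (u / 4 + 2 * del).
    have -> : (u / 4 + 2 * del) ^+ 2 = u ^+ 2 / 16 + u * del + 4 * del ^+ 2 by field.
    have -> : (u / 2 - del) ^+ 2 = u ^+ 2 / 4 - u * del + del ^+ 2 by field.
    lra.
  rewrite big_split /= -mulr_sumr sumr_const card_ord -/D2 -mulr_natr.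
  nra.
rewrite /Defs.edist.
have -> : 3 / 4 * Num.sqrt D2 = Num.sqrt (9 / 16 * D2).
  rewrite sqrtrM; last lra.
  have -> : (9 / 16 : R) = (3 / 4) ^+ 2 by field.
  by rewrite sqrtr_sqr ger0_norm.
by rewrite ler_sqrt //; lra.
Qed.

End Geometry.

Definition grid_cell {R : realType} {d : nat} (x : 'rV[R]_d) (b : R)
    (j : {ffun 'I_d -> 'I_(32 * d)}) : set 'rV[R]_d :=
  cell (\row_i (x ord0 i - b + (j i)%:R * (b / (16 * d)%:R))) (b / (16 * d)%:R).

Section Wall.
Variable R : realType.

(* In coordinate i take the cell inside [u, u + 2s], where u is the largest of
   m_i - 2s, -n and x_i - b (m the midpoint of p1 p2, s = b/(16d)). *)
Lemma grid_cell_sub_wall_region (d n : nat) (x p1 p2 : 'rV[R]_d) (a b : R) :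
  (2 <= d)%N -> 0 < a -> 10 * a < b -> cube x a `<=` cube 0 n%:R ->
  cube_bd x a p1 -> cube 0 n%:R p2 -> cube_bd x b p2 ->
  exists j, grid_cell x b j `<=`
    cube 0 n%:R `&` eball p1 (3/4 * Defs.edist p1 p2) `&` eball p2 (3/4 * Defs.edist p1 p2)
      `&` (cube x b `\` cube x a).
Proof.
move=> hd a0 ab sub [c1 _] Kp2 bd2; have [c2 [j0 hj0]] := bd2.
set D := d%:R : R.
have D2 : 2 <= D by rewrite /D ler_nat.
set s := b / (16 * d)%:R.
have bs : b = 16 * D * s by rewrite /s natrM -/D; field; rewrite pnatr_eq0; lia.
have s0 : 0 < s by rewrite /s divr_gt0 // ?ltr0n; [lra | lia].
have s32 : 32 * s <= b by rewrite bs; nra.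
have xb := cube_sub_cube0_coord a0 sub.
have K1 i : `|p1 ord0 i - x ord0 i| <= a by apply: c1.
have K2 i : `|p2 ord0 i - x ord0 i| <= b by apply: c2.
have K3 i : `|p2 ord0 i| <= n%:R by have := Kp2 i; rewrite mxE subr0.
have bn : b <= 2 * n%:R.
  have := K3 j0; have := xb j0; rewrite -hj0.
  by have := ler_normD (p2 ord0 j0) (- x ord0 j0); rewrite normrN; lra.
pose m i := (p1 ord0 i + p2 ord0 i) / 2.
have pick i : exists k : 'I_(32 * d), forall z,
    x ord0 i - b + k%:R * s <= z <= x ord0 i - b + k%:R * s + s ->
    [/\ m i - 2 * s <= z <= m i + 2 * s, - n%:R <= z <= n%:R & x ord0 i - b <= z <= x ord0 i + b].
  have [u [u1 u2 u3 ueq]] := exists_max3 (m i - 2 * s) (- n%:R) (x ord0 i - b).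
  have := K1 i; rewrite ler_norml => /andP[k1 k2].
  have := K2 i; rewrite ler_norml => /andP[k3 k4].
  have := K3 i; rewrite ler_norml => /andP[k5 k6].
  have : `|x ord0 i| <= n%:R - a by have := xb i; lra.
  rewrite ler_norml => /andP[k7 k8].
  have mi : m i = (p1 ord0 i + p2 ord0 i) / 2 by [].
  have uM : u + 2 * s <= x ord0 i - b + (32 * d)%:R * s.
    have -> : (32 * d)%:R * s = 2 * b by rewrite natrM -/D bs; ring.
    by case: ueq => [->|[->|->]]; lra.
  have [k [hk1 hk2]] := grid_cell_in_window s0 u3 uM.
  exists k => z /andP[z1 z2].
  by case: ueq => [ueq|[ueq|ueq]]; rewrite ueq in hk1 hk2; split; apply/andP; split; lra.
have [f hf] := choice pick.
have Dsq_lb : 80 * D * s ^+ 2 <= \sum_(i < d) (p1 ord0 i - p2 ord0 i) ^+ 2.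
  apply: le_trans (cube_bd_dist2_ge (ltW (lt_trans _ ab)) c1 bd2); last lra.
  have : (9 / 10 * b) ^+ 2 <= (b - a) ^+ 2 by rewrite lerXn2r ?nnegrE //; lra.
  rewrite bs => H; apply: le_trans H.
  have -> : (9 / 10 * (16 * D * s)) ^+ 2 = (9 / 10 * 16) ^+ 2 * D * D * s ^+ 2 by ring.
  by apply: ler_wpM2r; [exact: sqr_ge0 | nra].
exists [ffun i => f i] => z zc.
have Z i : [/\ m i - 2 * s <= z ord0 i <= m i + 2 * s, - n%:R <= z ord0 i <= n%:R
    & x ord0 i - b <= z ord0 i <= x ord0 i + b].
  by apply: hf; have := zc i; rewrite mxE ffunE.
have Zm i : `|z ord0 i - (p1 ord0 i + p2 ord0 i) / 2| <= 2 * s.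
  by rewrite ler_norml; case: (Z i); rewrite /m; lra.
split; [split; [split|]|split].
- by move=> i; rewrite mxE subr0 ler_norml; case: (Z i).
- apply: (@edist_le_near_midpoint R d p1 p2 z (2 * s) Zm).
  by apply: le_trans Dsq_lb; rewrite exprMn; lra.
- rewrite edistC; apply: (@edist_le_near_midpoint R d p2 p1 z (2 * s)).
    by move=> i; rewrite [p2 ord0 i + _]addrC; exact: Zm.
  rewrite (eq_bigr (fun i => (p1 ord0 i - p2 ord0 i) ^+ 2)); last first.
    by move=> i _; rewrite -sqrrN opprB.
  by apply: le_trans Dsq_lb; rewrite exprMn; lra.
- by move=> i; rewrite ler_norml; case: (Z i); lra.
- move=> ca; have := ca j0; rewrite ler_norml => /andP[q1 q2].
  have := K1 j0; rewrite ler_norml => /andP[q3 q4].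
  case: (Z j0); rewrite /m => zz _ _.
  have : 2 * s <= b / 16 by lra.
  move: hj0; case: (ler0P (p2 ord0 j0 - x ord0 j0)) => h; lra.
Qed.

Lemma contains_wall_of_grid (d n : nat) (x : 'rV[R]_d) (a b : R) (W : set 'rV[R]_d) :
  (2 <= d)%N -> 0 < a -> 10 * a < b -> cube x a `<=` cube 0 n%:R ->
  (forall j, W `&` grid_cell x b j !=set0) -> contains_wall W (cube 0 n%:R) x a b.
Proof.
move=> hd a0 ab sub hit p1 p2 h1 h2 h3.
have [j sj] := grid_cell_sub_wall_region hd a0 ab sub h1 h2 h3.
have [z [Wz cz]] := hit j.
have [[[Kz e1] e2] ann] := sj z cz.
by exists z.
Qed.

End Wall.

Section Poisson.
Variable R : realType.

Lemma borel_cell (d : nat) (lo : 'rV[R]_d) (s : R) : Defs.borel (cell lo s).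
Proof.
rewrite /Defs.borel -[cell lo s]setCK -setTD.
by apply: sigma_algebraCD; apply: sub_gen_smallest; rewrite /= openC; exact: closed_cell.
Qed.

Lemma bounded_cell (d : nat) (lo : 'rV[R]_d) (s : R) : Defs.bounded_set (cell lo s).
Proof.
exists (\sum_(i < d) (`|lo ord0 i| + `|lo ord0 i + s|)) => y yc i.
rewrite mxE subr0.
apply: (@le_trans _ _ (`|lo ord0 i| + `|lo ord0 i + s|)).
  have /andP[h1 h2] := yc i.
  case: (lerP 0 (y ord0 i)) => hy.
    rewrite ger0_norm //; have := ler_norm (lo ord0 i + s); have := normr_ge0 (lo ord0 i); lra.
  rewrite ltr0_norm //.
  have := normr_ge0 (lo ord0 i + s); have := ler_norm (- lo ord0 i); rewrite normrN; lra.
rewrite (bigD1 i) //= lerDl.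
by apply: sumr_ge0 => j _; apply: addr_ge0.
Qed.

Lemma poisson_pp_empty (d : nat) (dT : measure_display) (T : measurableType dT)
    (P : probability T R) (Pi : T -> set 'rV[R]_d) (A : set 'rV[R]_d) :
  poisson_pp P Pi -> Defs.borel A -> Defs.bounded_set A ->
  P [set w | (Pi w `&` A) #= `I_0] = (expR (- fine (leb A)))%:E.
Proof.
move=> [_ PP] hb hbd.
have dis (i j : 'I_1) : i != j -> A `&` A = set0 by rewrite !ord1 eqxx.
have := PP 1%N (fun _ => A) (fun _ => 0%N) (fun _ => hb) (fun _ => hbd) dis.
have -> : [set w | forall i : 'I_1, (Pi w `&` A) #= `I_0] = [set w | (Pi w `&` A) #= `I_0].
  by apply/seteqP; split => w /= h //; apply: h ord0.
by rewrite big_ord1 /pois_pmf expr0 fact0 divr1 mul1r.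
Qed.

Lemma measure_bigsetU_le (dT : measure_display) (T : measurableType dT) (P : probability T R)
    (I : Type) (r : seq I) (F : I -> set T) :
  (forall i, measurable (F i)) ->
  (P (\big[setU/set0]_(i <- r) F i) <= \sum_(i <- r) P (F i))%E.
Proof.
move=> mF; elim: r => [|a r IH]; first by rewrite !big_nil measure0.
rewrite !big_cons; apply: le_trans (measureU2 _ _ _) _ => //.
  exact: bigsetU_measurable.
exact: leeD.
Qed.

(* leb (grid_cell x b j) >= (s/4)^d with s = b/(16d), i.e. (b/(64d))^d. *)
Lemma grid_cell_empty_prob (d : nat) (dT : measure_display) (T : measurableType dT)
    (P : probability T R) (Pi : T -> set 'rV[R]_d) (x : 'rV[R]_d) (b : R) j :
  (0 < d)%N -> 0 < b -> poisson_pp P Pi ->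
  (P [set w | (Pi w `&` grid_cell x b j) #= `I_0] <=
     (expR (- ((64 * d)%:R^-1 ^+ d) * b ^+ d))%:E)%E.
Proof.
move=> d0 b0 PP.
rewrite poisson_pp_empty //; [|exact: borel_cell|exact: bounded_cell].
set s := b / (16 * d)%:R.
have s0 : 0 < s by rewrite /s divr_gt0 // ltr0n; lia.
rewrite lee_fin ler_expR mulNr lerN2.
have -> : (64 * d)%:R^-1 ^+ d * b ^+ d = (s / 4) ^+ d.
  rewrite -exprMn; congr (_ ^+ _); rewrite /s !natrM; field.
  by rewrite pnatr_eq0; lia.
exact: fine_leb_cell_ge.
Qed.

End Poisson.

Lemma expR_gap_ge1 (R : realType) (d : nat) (c' b B : R) :
  0 <= c' -> 0 <= b <= B -> 1 <= expR (c' * B ^+ d) * expR (- c' * b ^+ d).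
Proof.
move=> c'0 /andP[b0 bB].
have hbd : b ^+ d <= B ^+ d by rewrite lerXn2r ?nnegrE //; lra.
rewrite -expRD; have := expR_ge1Dx (c' * B ^+ d + - c' * b ^+ d).
have : 0 <= c' * B ^+ d + - c' * b ^+ d.
  by rewrite mulNr -mulrBr mulr_ge0 // subr_ge0.
lra.
Qed.

Unset Implicit Arguments.

Theorem lemma7p4 (R : realType) (d : nat) (hd : (2 <= d)%N) (a0 : R) (ha0 : 0 < a0) :
  exists c c' : R, 0 < c /\ 0 < c' /\
  forall (dT : measure_display) (T : measurableType dT) (P : probability T R)
         (Pi : T -> set 'rV[R]_d),
  poisson_pp P Pi ->
  forall (x : 'rV[R]_d) (n : nat), (0 < n)%N ->
  forall a : R, 0 < a -> a <= a0 -> cube x a `<=` cube 0 n%:R ->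
  forall b : R, a < b -> cube 0 n%:R `&` cube_bd x b !=set0 ->
  exists E : set T, measurable E /\
    [set w | ~ contains_wall (Pi w) (cube 0 n%:R) x a b] `<=` E /\
    (P E <= (c * expR (- c' * b ^+ d))%:E)%E.
Proof.
pose c' : R := (64 * d)%:R^-1 ^+ d.
pose c : R := ((32 * d) ^ d)%:R + expR (c' * (10 * a0) ^+ d).
have d0 : (0 < d)%N by lia.
have c'0 : 0 < c' by rewrite exprn_gt0 // invr_gt0 ltr0n; lia.
exists c, c'; split; first by rewrite ltr_pwDr ?expR_gt0.
split => // dT T P Pi PP x n _ a a0' aa0 sub b ab _.
have b0 : 0 < b by lra.
have [hb|hb] := lerP b (10 * a0).
  exists setT; split => //; split => //.
  rewrite probability_setT lee_fin.
  have b_small : 0 <= b <= 10 * a0 by lra.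
  apply: (le_trans (@expR_gap_ge1 R d c' b _ (ltW c'0) b_small)).
  by rewrite ler_wpM2r ?(ltW (expR_gt0 _)) // lerDr.
pose empty_cell j := [set w | (Pi w `&` grid_cell x b j) #= `I_0].
have mempty j : measurable (empty_cell j).
  by apply: PP.1; [exact: borel_cell | exact: bounded_cell].
exists (\big[setU/set0]_j empty_cell j); split; first exact: bigsetU_measurable.
split.
  move=> w /= nowall; apply: contrapT => noempty; apply: nowall.
  apply: contains_wall_of_grid hd a0' _ sub _ => [|j]; first lra.
  have : ~ empty_cell j w by move=> ej; apply: noempty; rewrite (bigD1 j) //=; left.
  by rewrite /empty_cell /= II0 card_eq0 => /negP/set0P.
apply: le_trans (measure_bigsetU_le P _ mempty) _.
apply: (@le_trans _ _ (\sum_j (expR (- c' * b ^+ d))%:E)%E).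
  by apply: lee_sum => j _; exact: grid_cell_empty_prob.
rewrite sumEFin lee_fin sumr_const card_ffun !card_ord -mulr_natl.
by rewrite ler_wpM2r ?(ltW (expR_gt0 _)) // lerDl ltW ?expR_gt0.
Qed.
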